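(* Let $p\in\{2,3\}$, let $\mathbf{k}$ be a field of characteristic $p$, and let $K=\mathbf{k}[y_1,y_2,y_3]/(y_1^p,y_2^p,y_3^p)$. Let $\mathcal{L}=Lie_K(x_1,x_2,x_3\mid y_3x_3=y_2x_2+y_1x_1)$. Then $\mathcal{L}$ is not embeddable into its universal enveloping algebra $U_K(\mathcal{L})=K\langle x_1,x_2,x_3\mid y_3x_3=y_2x_2+y_1x_1\rangle$; i.e., the canonical map $\mathcal{L}\to U_K(\mathcal{L})$ is not injective.
   Context: $Lie_K(X\mid\cdot)$ denotes the free Lie $K$-algebra on $X$ modulo the ideal generated by the given relation; $U_K(\mathcal L)$ is the corresponding associative $K$-algebra with identity, and the canonical map is induced by $x_i\mapsto x_i$. *)

From HB Require Import structures.
From mathcomp Require Import all_boot all_algebra.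
From mathcomp Require Import mpoly.
Set Implicit Arguments. Unset Strict Implicit. Unset Printing Implicit Defensive.
Import GRing.Theory.
Local Open Scope ring_scope.

(* Scalars: the polynomial ring P = k[y1,y2,y3] = {mpoly k[3]}, with y_(i+1) = 'X_i.
   A module over K = P/(y1^p,y2^p,y3^p) is exactly a P-module annihilated by
   the ideal (y1^p,y2^p,y3^p); this is how K-scalars are encoded below. *)

Section Presentations.
Variable k : fieldType.
Variable p : nat.
Local Notation P := {mpoly k[3]}.
Local Notation y i := ('X_(i : 'I_3) : P).

Definition i0 : 'I_3 := @Ordinal 3 0 isT.
Definition i1 : 'I_3 := @Ordinal 3 1 isT.
Definition i2 : 'I_3 := @Ordinal 3 2 isT.

Inductive lterm : Type :=
| LVar  of 'I_3
| LZero
| LAdd  of lterm & lterm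
| LScal of P & lterm
| LBr   of lterm & lterm.

Inductive lie_eqv : lterm -> lterm -> Prop :=
| le_refl a : lie_eqv a a
| le_sym a b : lie_eqv a b -> lie_eqv b a
| le_trans a b c : lie_eqv a b -> lie_eqv b c -> lie_eqv a c
| le_add a a' b b' : lie_eqv a a' -> lie_eqv b b' -> lie_eqv (LAdd a b) (LAdd a' b')
| le_scal c a a' : lie_eqv a a' -> lie_eqv (LScal c a) (LScal c a')
| le_br a a' b b' : lie_eqv a a' -> lie_eqv b b' -> lie_eqv (LBr a b) (LBr a' b')
| le_addA a b c : lie_eqv (LAdd a (LAdd b c)) (LAdd (LAdd a b) c)
| le_addC a b : lie_eqv (LAdd a b) (LAdd b a)
| le_add0 a : lie_eqv (LAdd a LZero) a
| le_scalDl c d a : lie_eqv (LScal (c + d) a) (LAdd (LScal c a) (LScal d a))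
| le_scalDr c a b : lie_eqv (LScal c (LAdd a b)) (LAdd (LScal c a) (LScal c b))
| le_scalA c d a : lie_eqv (LScal (c * d) a) (LScal c (LScal d a))
| le_scal1 a : lie_eqv (LScal 1 a) a
| le_scal0 a : lie_eqv (LScal 0 a) LZero
| le_brDl a b c : lie_eqv (LBr (LAdd a b) c) (LAdd (LBr a c) (LBr b c))
| le_brDr a b c : lie_eqv (LBr a (LAdd b c)) (LAdd (LBr a b) (LBr a c))
| le_brZl c a b : lie_eqv (LBr (LScal c a) b) (LScal c (LBr a b))
| le_brZr c a b : lie_eqv (LBr a (LScal c b)) (LScal c (LBr a b))
| le_alt a : lie_eqv (LBr a a) LZero
| le_jacobi a b c :
    lie_eqv (LAdd (LBr a (LBr b c)) (LAdd (LBr b (LBr c a)) (LBr c (LBr a b)))) LZero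
| le_ann g i a : lie_eqv (LScal (g * y i ^+ p) a) LZero
| le_rel : lie_eqv (LScal (y i2) (LVar i2))
                   (LAdd (LScal (y i1) (LVar i1)) (LScal (y i0) (LVar i0))).

Inductive aterm : Type :=
| AVar  of 'I_3
| AZero
| AOne
| AAdd  of aterm & aterm
| AScal of P & aterm
| AMul  of aterm & aterm.

Inductive ass_eqv : aterm -> aterm -> Prop :=
| ae_refl a : ass_eqv a a
| ae_sym a b : ass_eqv a b -> ass_eqv b a
| ae_trans a b c : ass_eqv a b -> ass_eqv b c -> ass_eqv a c
| ae_add a a' b b' : ass_eqv a a' -> ass_eqv b b' -> ass_eqv (AAdd a b) (AAdd a' b')
| ae_scal c a a' : ass_eqv a a' -> ass_eqv (AScal c a) (AScal c a')
| ae_mul a a' b b' : ass_eqv a a' -> ass_eqv b b' -> ass_eqv (AMul a b) (AMul a' b')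
| ae_addA a b c : ass_eqv (AAdd a (AAdd b c)) (AAdd (AAdd a b) c)
| ae_addC a b : ass_eqv (AAdd a b) (AAdd b a)
| ae_add0 a : ass_eqv (AAdd a AZero) a
| ae_scalDl c d a : ass_eqv (AScal (c + d) a) (AAdd (AScal c a) (AScal d a))
| ae_scalDr c a b : ass_eqv (AScal c (AAdd a b)) (AAdd (AScal c a) (AScal c b))
| ae_scalA c d a : ass_eqv (AScal (c * d) a) (AScal c (AScal d a))
| ae_scal1 a : ass_eqv (AScal 1 a) a
| ae_scal0 a : ass_eqv (AScal 0 a) AZero
| ae_mulA a b c : ass_eqv (AMul a (AMul b c)) (AMul (AMul a b) c)
| ae_mul1l a : ass_eqv (AMul AOne a) a
| ae_mul1r a : ass_eqv (AMul a AOne) a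
| ae_mulDl a b c : ass_eqv (AMul (AAdd a b) c) (AAdd (AMul a c) (AMul b c))
| ae_mulDr a b c : ass_eqv (AMul a (AAdd b c)) (AAdd (AMul a b) (AMul a c))
| ae_mulZl c a b : ass_eqv (AMul (AScal c a) b) (AScal c (AMul a b))
| ae_mulZr c a b : ass_eqv (AMul a (AScal c b)) (AScal c (AMul a b))
| ae_ann g i a : ass_eqv (AScal (g * y i ^+ p) a) AZero
| ae_rel : ass_eqv (AScal (y i2) (AVar i2))
                   (AAdd (AScal (y i1) (AVar i1)) (AScal (y i0) (AVar i0))).

Fixpoint lie_to_ass (t : lterm) : aterm :=
  match t with
  | LVar i => AVar i
  | LZero => AZero
  | LAdd a b => AAdd (lie_to_ass a) (lie_to_ass b)
  | LScal c a => AScal c (lie_to_ass a)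
  | LBr a b => AAdd (AMul (lie_to_ass a) (lie_to_ass b))
                    (AScal (-1) (AMul (lie_to_ass b) (lie_to_ass a)))
  end.

Definition canonical_map_injective : Prop :=
  forall a b : lterm, ass_eqv (lie_to_ass a) (lie_to_ass b) -> lie_eqv a b.

End Presentations.

(* Write a = y2 x2 and b = y1 x1.  The relation says a + b = y3 x3, so in U the
   p-th powers of a, b and a + b vanish; by Jacobson's formula the Lie element
   lambda_p = [a, b] (p = 2), resp. [b, [b, a]] - [a, [b, a]] (p = 3), differs from
   (a + b)^p - a^p - b^p by a multiple of p, hence maps to 0 in U.
   To see that lambda_p is nonzero in L, map L to a truncated free algebra M over
   k[y1, y2, y3] and compose with a linear functional Psi : M -> k[y1, y2, y3]
   that sends the Jacobi identities and the ideal generated by the relation into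
   (y1^p, y2^p, y3^p).  Every element that vanishes in L then has Psi-value in this
   ideal, while Psi(lambda_p) is -y1 y2 y3, resp. 2 y1^2 y2^2 y3^2, which is not. *)

From mathcomp Require Import all_boot all_algebra.
From mathcomp Require Import mpoly.
From mathcomp Require Import ring.
Set Implicit Arguments. Unset Strict Implicit. Unset Printing Implicit Defensive.
Import GRing.Theory.
Local Open Scope ring_scope.

Local Notation y1 := ('X_i0 : {mpoly _[3]}).
Local Notation y2 := ('X_i1 : {mpoly _[3]}).
Local Notation y3 := ('X_i2 : {mpoly _[3]}).

Section PowerIdeal.
Variable k : fieldType.
Variable p : nat.
Local Notation P := {mpoly k[3]}.

Definition inIp (f : P) := exists q : 'I_3 -> P, f = \sum_i 'X_i ^+ p * q i.

Lemma inIp0 : inIp 0.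
Proof. by exists (fun=> 0); rewrite big1 // => i _; rewrite mulr0. Qed.

Lemma inIpD f g : inIp f -> inIp g -> inIp (f + g).
Proof.
move=> [qf ->] [qg ->]; exists (fun i => qf i + qg i).
by rewrite -big_split; apply: eq_bigr => i _; rewrite mulrDr.
Qed.

Lemma inIpMl c f : inIp f -> inIp (c * f).
Proof.
move=> [q ->]; exists (fun i => c * q i).
by rewrite mulr_sumr; apply: eq_bigr => i _; rewrite mulrCA.
Qed.

Lemma inIpX i f : inIp ('X_i ^+ p * f).
Proof.
exists (fun j => if j == i then f else 0).
rewrite (bigD1 i) //= eqxx big1 ?addr0 // => j /negbTE->; exact: mulr0.
Qed.

Lemma inIp_mcoeff f (m : 'X_{1..3}) : inIp f -> (forall i, m i < p)%N -> f@_m = 0.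
Proof.
move=> [q ->] mp; rewrite raddf_sum big1 // => i _ /=.
rewrite mulrC mpolyXn mcoeffM big1 // => mm /eqP dm.
rewrite mcoeffX; case: eqP => [e2|]; last by rewrite mulr0.
move: (mp i).
have /= -> := congr1 (fun n : 'X_{1..3} => n i) dm.
by rewrite mnmDE -e2 mulmnE mnm1E eqxx mul1n ltnNge leq_addl.
Qed.

End PowerIdeal.

Section TruncatedAlgebra.
Variable R : comPzRingType.

(* Coordinates of an element of the free anticommutative R-algebra on e1, e2, e3
   truncated above degree 3: u_i on e_i, w_ij on [e_i, e_j] (i < j) and t_aij on
   [e_a, [e_i, e_j]].  The Jacobi identity is not imposed. *)
Record M := mkM { u1 : R; u2 : R; u3 : R; w12 : R; w13 : R; w23 : R;
  t112 : R; t113 : R; t123 : R; t212 : R; t213 : R; t223 : R;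
  t312 : R; t313 : R; t323 : R }.

Definition mzero := mkM 0 0 0 0 0 0 0 0 0 0 0 0 0 0 0.
Definition madd m n := mkM (u1 m + u1 n) (u2 m + u2 n) (u3 m + u3 n)
  (w12 m + w12 n) (w13 m + w13 n) (w23 m + w23 n)
  (t112 m + t112 n) (t113 m + t113 n) (t123 m + t123 n)
  (t212 m + t212 n) (t213 m + t213 n) (t223 m + t223 n)
  (t312 m + t312 n) (t313 m + t313 n) (t323 m + t323 n).
Definition mscale (c : R) m := mkM (c * u1 m) (c * u2 m) (c * u3 m)
  (c * w12 m) (c * w13 m) (c * w23 m)
  (c * t112 m) (c * t113 m) (c * t123 m)
  (c * t212 m) (c * t213 m) (c * t223 m)
  (c * t312 m) (c * t313 m) (c * t323 m).
Definition msub m n := madd m (mscale (-1) n).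
Definition mbr m n := mkM 0 0 0
  (u1 m * u2 n - u2 m * u1 n) (u1 m * u3 n - u3 m * u1 n) (u2 m * u3 n - u3 m * u2 n)
  (u1 m * w12 n - u1 n * w12 m) (u1 m * w13 n - u1 n * w13 m) (u1 m * w23 n - u1 n * w23 m)
  (u2 m * w12 n - u2 n * w12 m) (u2 m * w13 n - u2 n * w13 m) (u2 m * w23 n - u2 n * w23 m)
  (u3 m * w12 n - u3 n * w12 m) (u3 m * w13 n - u3 n * w13 m) (u3 m * w23 n - u3 n * w23 m).
Definition mgen (i : 'I_3) : M :=
  match nat_of_ord i with
  | 0 => mkM 1 0 0 0 0 0 0 0 0 0 0 0 0 0 0
  | 1 => mkM 0 1 0 0 0 0 0 0 0 0 0 0 0 0 0
  | _ => mkM 0 0 1 0 0 0 0 0 0 0 0 0 0 0 0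
  end.

Definition jacobiator a b c :=
  madd (mbr a (mbr b c)) (madd (mbr b (mbr c a)) (mbr c (mbr a b))).

End TruncatedAlgebra.

Arguments mgen {R} i.
Arguments msub {R} m n /.
Arguments madd {R} m n /.
Arguments mscale {R} c m /.
Arguments mbr {R} m n /.
Arguments mzero {R} /.
Arguments jacobiator {R} a b c /.

Ltac munfold :=
  cbn [msub mbr madd mscale mzero mgen jacobiator nat_of_ord i0 i1 i2
       u1 u2 u3 w12 w13 w23 t112 t113 t123 t212 t213 t223 t312 t313 t323].

Ltac mring :=
  repeat match goal with m : M _ |- _ => case: m => ? ? ? ? ? ? ? ? ? ? ? ? ? ? ? end;
  munfold; congr mkM; ring.

Section TruncatedAlgebraTheory.
Variable R : comPzRingType.
Implicit Types (a b c d n : M R) (s : R).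

Lemma msubxx a : msub a a = mzero. Proof. mring. Qed.
Lemma msubr0 a : msub a mzero = a. Proof. mring. Qed.
Lemma msubC a b : msub b a = mscale (-1) (msub a b). Proof. mring. Qed.
Lemma msub_trans b a c : msub a c = madd (msub a b) (msub b c). Proof. mring. Qed.
Lemma msubDD a b c d : msub (madd a b) (madd c d) = madd (msub a c) (msub b d).
Proof. mring. Qed.
Lemma msubZZ s a b : msub (mscale s a) (mscale s b) = mscale s (msub a b).
Proof. mring. Qed.
Lemma msub_br a b c d : msub (mbr a b) (mbr c d) = madd (mbr (msub a c) b) (mbr c (msub b d)).
Proof. mring. Qed.
Lemma mbrDl a b n : mbr (madd a b) n = madd (mbr a n) (mbr b n). Proof. mring. Qed.
Lemma mbrZl s a n : mbr (mscale s a) n = mscale s (mbr a n). Proof. mring. Qed.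
Lemma mbrC a b : mbr a b = mscale (-1) (mbr b a). Proof. mring. Qed.
Lemma mbr0l n : mbr mzero n = mzero. Proof. mring. Qed.
Lemma mbr_nilpotent_l a b c d : mbr (mbr (mbr a b) c) d = mzero. Proof. mring. Qed.
Lemma mbr_nilpotent_r a b c d : mbr (mbr a (mbr b c)) d = mzero. Proof. mring. Qed.

Lemma mbr_jacobiator a b c n : mbr (jacobiator a b c) n = mzero.
Proof. by rewrite /jacobiator !mbrDl !mbr_nilpotent_r; mring. Qed.

End TruncatedAlgebraTheory.

Section TestFunctional.
Variable k : fieldType.
Variable p : nat.
Local Notation P := {mpoly k[3]}.
Local Notation M := (M P).

Fixpoint interp (t : lterm k) : M :=
  match t with
  | LVar i => mgen i
  | LZero => mzero
  | LAdd a b => madd (interp a) (interp b)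
  | LScal c a => mscale c (interp a)
  | LBr a b => mbr (interp a) (interp b)
  end.

Definition mrel : M :=
  msub (mscale y3 (mgen i2)) (madd (mscale y2 (mgen i1)) (mscale y1 (mgen i0))).

Section Functional.
Variables g12 g13 g23 h112 h113 h123 h212 h213 h223 h312 h313 h323 : P.

Definition Psi m := g12 * w12 m + g13 * w13 m + g23 * w23 m
  + h112 * t112 m + h113 * t113 m + h123 * t123 m
  + h212 * t212 m + h213 * t213 m + h223 * t223 m
  + h312 * t312 m + h313 * t313 m + h323 * t323 m.

Hypothesis Psi_jacobi : h123 - h213 + h312 = 0.
(* Psi kills [r, n] and [[r, n], n'] for the relation r = mrel, written
   coordinate by coordinate in n and n'. *)
Hypothesis rel_w12 : - y1 * h112 - y2 * h212 + y3 * h312 = 0.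
Hypothesis rel_w13 : - y1 * h113 - y2 * h213 + y3 * h313 = 0.
Hypothesis rel_w23 : - y1 * h123 - y2 * h223 + y3 * h323 = 0.
Hypothesis rel_u1 : y2 * g12 - y3 * g13 = 0.
Hypothesis rel_u2 : - y1 * g12 - y3 * g23 = 0.
Hypothesis rel_u3 : - y1 * g13 - y2 * g23 = 0.
Hypothesis rel_11 : y2 * h112 - y3 * h113 = 0.
Hypothesis rel_12 : - y1 * h112 - y3 * h123 = 0.
Hypothesis rel_13 : - y1 * h113 - y2 * h123 = 0.
Hypothesis rel_21 : y2 * h212 - y3 * h213 = 0.
Hypothesis rel_22 : - y1 * h212 - y3 * h223 = 0.
Hypothesis rel_23 : - y1 * h213 - y2 * h223 = 0.
Hypothesis rel_31 : y2 * h312 - y3 * h313 = 0.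
Hypothesis rel_32 : - y1 * h312 - y3 * h323 = 0.
Hypothesis rel_33 : - y1 * h313 - y2 * h323 = 0.

Lemma Psi0 : Psi mzero = 0. Proof. by rewrite /Psi; munfold; ring. Qed.
Lemma PsiD a b : Psi (madd a b) = Psi a + Psi b. Proof. by rewrite /Psi; munfold; ring. Qed.
Lemma PsiZ c a : Psi (mscale c a) = c * Psi a. Proof. by rewrite /Psi; munfold; ring. Qed.

(* The ideal generated by m is mapped by Psi into (y1^p, y2^p, y3^p); two test
   brackets suffice because brackets of depth three vanish in M. *)
Definition null m := forall n n',
  [/\ inIp p (Psi m), inIp p (Psi (mbr m n)) & inIp p (Psi (mbr (mbr m n) n'))].

Lemma null0 : null mzero.
Proof. by move=> n n'; rewrite !mbr0l Psi0; split; exact: inIp0. Qed.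

Lemma nullD a b : null a -> null b -> null (madd a b).
Proof.
move=> na nb n n'; have [? ? ?] := na n n'; have [? ? ?] := nb n n'.
by rewrite !mbrDl !PsiD; split; apply: inIpD.
Qed.

Lemma nullZ c a : null a -> null (mscale c a).
Proof.
by move=> na n n'; have [? ? ?] := na n n'; rewrite !mbrZl !PsiZ; split; apply: inIpMl.
Qed.

Lemma null_brl a b : null a -> null (mbr a b).
Proof.
move=> na n n'; have [_ ? ?] := na b n.
by rewrite mbr_nilpotent_l Psi0; split=> //; exact: inIp0.
Qed.

Lemma null_brr a b : null b -> null (mbr a b).
Proof. by move=> nb; rewrite mbrC; apply/nullZ/null_brl. Qed.

Lemma null_scaleXp g (i : 'I_3) a : null (mscale (g * 'X_i ^+ p) a).
Proof.
by move=> n n'; rewrite !mbrZl !PsiZ [g * _]mulrC -!mulrA; split; exact: inIpX.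
Qed.

Lemma null_jacobiator a b c : null (jacobiator a b c).
Proof.
move=> n n'; rewrite !mbr_jacobiator mbr0l Psi0.
have -> : Psi (jacobiator a b c) =
    (u1 a * (u2 b * u3 c - u3 b * u2 c) - u2 a * (u1 b * u3 c - u3 b * u1 c)
     + u3 a * (u1 b * u2 c - u2 b * u1 c)) * (h123 - h213 + h312).
  by rewrite /Psi; munfold; ring.
by rewrite Psi_jacobi mulr0; split; exact: inIp0.
Qed.

Lemma null_rel : null mrel.
Proof.
move=> n n'; split.
- by rewrite (_ : Psi mrel = 0); [exact: inIp0 | rewrite /Psi /mrel; munfold; ring].
- rewrite (_ : Psi (mbr mrel n) = 0); first exact: inIp0.
  rewrite (_ : Psi _ = w12 n * (- y1 * h112 - y2 * h212 + y3 * h312)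
       + w13 n * (- y1 * h113 - y2 * h213 + y3 * h313)
       + w23 n * (- y1 * h123 - y2 * h223 + y3 * h323)
       + u1 n * (y2 * g12 - y3 * g13) + u2 n * (- y1 * g12 - y3 * g23)
       + u3 n * (- y1 * g13 - y2 * g23)); last by rewrite /Psi /mrel; munfold; ring.
  by rewrite rel_w12 rel_w13 rel_w23 rel_u1 rel_u2 rel_u3; ring.
- rewrite (_ : Psi (mbr (mbr mrel n) n') = 0); first exact: inIp0.
  rewrite (_ : Psi _ = - (u1 n' * (u1 n * (y2 * h112 - y3 * h113)
         + u2 n * (- y1 * h112 - y3 * h123) + u3 n * (- y1 * h113 - y2 * h123))
       + u2 n' * (u1 n * (y2 * h212 - y3 * h213)
         + u2 n * (- y1 * h212 - y3 * h223) + u3 n * (- y1 * h213 - y2 * h223))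
       + u3 n' * (u1 n * (y2 * h312 - y3 * h313)
         + u2 n * (- y1 * h312 - y3 * h323) + u3 n * (- y1 * h313 - y2 * h323))));
    last by rewrite /Psi /mrel; munfold; ring.
  by rewrite rel_11 rel_12 rel_13 rel_21 rel_22 rel_23 rel_31 rel_32 rel_33; ring.
Qed.

Lemma null_interp a b : lie_eqv p a b -> null (msub (interp a) (interp b)).
Proof.
elim=> {a b}; cbn [interp].
- by move=> a; rewrite msubxx; exact: null0.
- by move=> a b _ nab; rewrite msubC; exact: nullZ.
- by move=> a b c _ nab _ nbc; rewrite (msub_trans (interp b)); exact: nullD.
- by move=> a a' b b' _ na _ nb; rewrite msubDD; exact: nullD.
- by move=> c a a' _ na; rewrite msubZZ; exact: nullZ.
- move=> a a' b b' _ na _ nb; rewrite msub_br.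
  by apply: nullD; [exact: null_brl | exact: null_brr].
1-13: by move=> *; rewrite (_ : msub _ _ = mzero); [exact: null0 | munfold; congr mkM; ring].
- by move=> a b c; rewrite msubr0; exact: null_jacobiator.
- by move=> g i a; rewrite msubr0; exact: null_scaleXp.
- exact: null_rel.
Qed.

Lemma Psi_interp_inIp a : lie_eqv p a (LZero k) -> inIp p (Psi (interp a)).
Proof. by move=> /null_interp /(_ mzero mzero) [+ _ _]; rewrite msubr0. Qed.

End Functional.
End TestFunctional.

Section AssocNormalForm.
Variable k : fieldType.
Variable p : nat.
Local Notation P := {mpoly k[3]}.
Local Notation A := (aterm k).
Local Notation "a ≈ b" := (ass_eqv p a b) (at level 70).

Lemma aadd0l (a : A) : AAdd (AZero k) a ≈ a.
Proof. exact: ae_trans (ae_addC _ _ _) (ae_add0 _ _). Qed.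

Lemma aaddCA (a b c : A) : AAdd a (AAdd b c) ≈ AAdd b (AAdd a c).
Proof.
apply: ae_trans (ae_addA _ _ _ _) _.
apply: ae_trans (ae_add (ae_addC _ _ _) (ae_refl _ _)) _.
exact: ae_sym (ae_addA _ _ _ _).
Qed.

Lemma ascal0r (c : P) : AScal c (AZero k) ≈ AZero k.
Proof.
apply: ae_trans (ae_scal c (ae_sym (ae_scal0 p (AZero k)))) _.
apply: ae_trans (ae_sym (ae_scalA _ _ _ _)) _.
by rewrite mulr0; exact: ae_scal0.
Qed.

Lemma amul0l (a : A) : AMul (AZero k) a ≈ AZero k.
Proof.
apply: ae_trans (ae_mul (ae_sym (ae_scal0 p (AZero k))) (ae_refl _ a)) _.
exact: ae_trans (ae_mulZl _ _ _ _) (ae_scal0 _ _).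
Qed.

Lemma amul0r (a : A) : AMul a (AZero k) ≈ AZero k.
Proof.
apply: ae_trans (ae_mul (ae_refl _ a) (ae_sym (ae_scal0 p (AZero k)))) _.
exact: ae_trans (ae_mulZr _ _ _ _) (ae_scal0 _ _).
Qed.

Lemma aadd_eq0 (a b : A) : a ≈ AZero k -> b ≈ AZero k -> AAdd a b ≈ AZero k.
Proof. by move=> a0 b0; apply: ae_trans (ae_add a0 b0) _; exact: aadd0l. Qed.

Lemma ascal_eq0 c (a : A) : a ≈ AZero k -> AScal c a ≈ AZero k.
Proof. by move=> a0; apply: ae_trans (ae_scal c a0) _; exact: ascal0r. Qed.

(* A noncommutative polynomial is a list of monomials (coefficient, word); the
   letter i of a word stands for the generator x_(i+1). *)
Definition ncpoly := seq (P * seq nat).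

Definition aword (w : seq nat) : A :=
  foldr (fun i t => AMul (AVar k (inord i)) t) (AOne k) w.

Definition ncterm (l : ncpoly) : A :=
  foldr (fun m t => AAdd (AScal m.1 (aword m.2)) t) (AZero k) l.

Fixpoint ncmul (l1 l2 : ncpoly) : ncpoly :=
  if l1 is m1 :: l1' then
    map (fun m2 => (m1.1 * m2.1, m1.2 ++ m2.2)) l2 ++ ncmul l1' l2
  else [::].

Fixpoint ncnorm (t : A) : ncpoly :=
  match t with
  | AVar i => [:: (1, [:: nat_of_ord i])]
  | AZero => [::]
  | AOne => [:: (1, [::])]
  | AAdd a b => ncnorm a ++ ncnorm b
  | AScal c a => map (fun m => (c * m.1, m.2)) (ncnorm a)
  | AMul a b => ncmul (ncnorm a) (ncnorm b)
  end.

Lemma ncterm_cat l1 l2 : ncterm (l1 ++ l2) ≈ AAdd (ncterm l1) (ncterm l2).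
Proof.
elim: l1 => [|m l1 IH] /=; first exact: ae_sym (aadd0l _).
exact: ae_trans (ae_add (ae_refl _ _) IH) (ae_addA _ _ _ _).
Qed.

Lemma ncterm_scale c l : ncterm (map (fun m => (c * m.1, m.2)) l) ≈ AScal c (ncterm l).
Proof.
elim: l => [|m l IH] /=; first exact: ae_sym (ascal0r c).
apply: ae_trans _ (ae_sym (ae_scalDr _ _ _ _)).
exact: ae_add (ae_scalA _ _ _ _) IH.
Qed.

Lemma aword_cat w1 w2 : aword (w1 ++ w2) ≈ AMul (aword w1) (aword w2).
Proof.
elim: w1 => [|i w1 IH] /=; first exact: ae_sym (ae_mul1l _ _).
exact: ae_trans (ae_mul (ae_refl _ _) IH) (ae_mulA _ _ _ _).
Qed.

Lemma ncterm_mul_monomial c w l :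
  ncterm (map (fun m => (c * m.1, w ++ m.2)) l) ≈ AMul (AScal c (aword w)) (ncterm l).
Proof.
elim: l => [|m l IH] /=; first exact: ae_sym (amul0r _).
apply: ae_trans _ (ae_sym (ae_mulDr _ _ _ _)).
apply: ae_add IH.
apply: ae_trans (ae_scalA _ _ _ _) _.
apply: ae_trans (ae_scal c (ae_scal m.1 (aword_cat w m.2))) _.
apply: ae_trans _ (ae_sym (ae_mulZl _ _ _ _)).
exact: ae_scal (ae_sym (ae_mulZr _ _ _ _)).
Qed.

Lemma ncterm_mul l1 l2 : ncterm (ncmul l1 l2) ≈ AMul (ncterm l1) (ncterm l2).
Proof.
elim: l1 => [|m l1 IH] /=; first exact: ae_sym (amul0l _).
apply: ae_trans (ncterm_cat _ _) _.
apply: ae_trans _ (ae_sym (ae_mulDl _ _ _ _)).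
exact: ae_add (ncterm_mul_monomial _ _ _) IH.
Qed.

Lemma ncnormK t : t ≈ ncterm (ncnorm t).
Proof.
elim: t => [i||| a IHa b IHb | c a IHa | a IHa b IHb] /=.
- rewrite inord_val; apply: ae_sym; apply: ae_trans (ae_add0 _ _) _.
  exact: ae_trans (ae_scal1 _ _) (ae_mul1r _ _).
- exact: ae_refl.
- exact: ae_sym (ae_trans (ae_add0 _ _) (ae_scal1 _ _)).
- exact: ae_trans (ae_add IHa IHb) (ae_sym (ncterm_cat _ _)).
- exact: ae_trans (ae_scal c IHa) (ae_sym (ncterm_scale _ _)).
- exact: ae_trans (ae_mul IHa IHb) (ae_sym (ncterm_mul _ _)).
Qed.

Definition nccoef (l : ncpoly) (w : seq nat) : P :=
  foldr (fun m c => (if m.2 == w then m.1 else 0) + c) 0 l.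

Definition ncsum (S : seq (seq nat)) (f : seq nat -> P) : A :=
  foldr (fun w t => AAdd (AScal (f w) (aword w)) t) (AZero k) S.

Lemma ncsum0 S : ncsum S (fun=> 0) ≈ AZero k.
Proof.
elim: S => [|w S IH] /=; first exact: ae_refl.
exact: ae_trans (ae_add (ae_scal0 _ _) IH) (ae_add0 _ _).
Qed.

Lemma eq_in_ncsum S f g : {in S, f =1 g} -> ncsum S f = ncsum S g.
Proof.
elim: S => [|w S IH] //= fg.
by rewrite fg ?mem_head // IH // => x xS; apply: fg; rewrite inE xS orbT.
Qed.

Lemma ncsum_add S w0 c f : uniq S -> w0 \in S ->
  ncsum S (fun w => (if w0 == w then c else 0) + f w) ≈ AAdd (AScal c (aword w0)) (ncsum S f).
Proof.
elim: S => [|w S IH] //= /andP [wS uS]; rewrite inE.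
have [->|ne] := eqVneq w0 w => /= w0S.
- rewrite (@eq_in_ncsum _ _ f); last first.
    by move=> x xS /=; rewrite eq_sym (negbTE (memPn wS x xS)) add0r.
  apply: ae_trans (ae_add (ae_scalDl _ _ _ _) (ae_refl _ _)) _.
  exact: ae_sym (ae_addA _ _ _ _).
- by rewrite add0r; apply: ae_trans (ae_add (ae_refl _ _) (IH uS w0S)) _; exact: aaddCA.
Qed.

Lemma ncterm_collect l S : uniq S -> all (fun m => m.2 \in S) l ->
  ncterm l ≈ ncsum S (nccoef l).
Proof.
move=> uS; elim: l => [|m l IH] /=; first by move=> _; exact: ae_sym (ncsum0 S).
case/andP=> mS lS.
exact: ae_trans (ae_add (ae_refl _ _) (IH lS)) (ae_sym (ncsum_add _ _ uS mS)).
Qed.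

Fixpoint all_words (S : seq (seq nat)) (Q : seq nat -> Prop) : Prop :=
  if S is w :: S' then Q w /\ all_words S' Q else True.

Lemma all_wordsP S Q : all_words S Q -> {in S, forall w, Q w}.
Proof.
elim: S => [|w S IH] //= [Qw QS] x; rewrite inE; case/orP=> [/eqP->//|]; exact: IH.
Qed.

Lemma ass_eqv_ncnorm t1 t2 S : uniq S ->
  all (fun m => m.2 \in S) (ncnorm t1) -> all (fun m => m.2 \in S) (ncnorm t2) ->
  all_words S (fun w => nccoef (ncnorm t1) w = nccoef (ncnorm t2) w) -> t1 ≈ t2.
Proof.
move=> uS S1 S2 /all_wordsP coef12.
apply: ae_trans (ncnormK t1) _; apply: ae_trans _ (ae_sym (ncnormK t2)).
apply: ae_trans (ncterm_collect uS S1) _; apply: ae_trans _ (ae_sym (ncterm_collect uS S2)).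
by rewrite (eq_in_ncsum coef12); exact: ae_refl.
Qed.

End AssocNormalForm.

Section Witnesses.
Variable k : fieldType.
Local Notation P := {mpoly k[3]}.

Definition lie_a : lterm k := LScal y2 (LVar k i1).
Definition lie_b : lterm k := LScal y1 (LVar k i0).

(* Jacobson's formula: (a + b)^p - a^p - b^p = lambda_p modulo p, for p = 2, 3. *)
Definition lambda2 := LBr lie_a lie_b.
Definition lambda3 :=
  LAdd (LBr lie_b (LBr lie_b lie_a)) (LScal (-1) (LBr lie_a (LBr lie_b lie_a))).

Fixpoint apow (x : aterm k) (n : nat) : aterm k :=
  if n is n'.+1 then AMul x (apow x n') else AOne k.

Section Power.
Variable p : nat.
Local Notation "a ≈ b" := (ass_eqv p a b) (at level 70).

Lemma apow_eqv a b n : a ≈ b -> apow a n ≈ apow b n.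
Proof. by move=> ab; elim: n => [|n IH] /=; [exact: ae_refl | exact: ae_mul]. Qed.

Lemma apowZ c a n : apow (AScal c a) n ≈ AScal (c ^+ n) (apow a n).
Proof.
elim: n => [|n IH] /=; first by rewrite expr0; exact: ae_sym (ae_scal1 _ _).
apply: ae_trans (ae_mul (ae_refl _ _) IH) _.
apply: ae_trans (ae_mulZl _ _ _ _) _; apply: ae_trans (ae_scal c (ae_mulZr _ _ _ _)) _.
by rewrite exprS; exact: ae_sym (ae_scalA _ _ _ _).
Qed.

Lemma apow_scaleX_eq0 (i : 'I_3) a : apow (AScal 'X_i a) p ≈ AZero k.
Proof. by apply: ae_trans (apowZ _ _ _) _; rewrite -[_ ^+ p]mul1r; exact: ae_ann. Qed.

Local Notation a := (lie_to_ass lie_a).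
Local Notation b := (lie_to_ass lie_b).
Local Notation aopp t := (AScal (-1) t).

Lemma pow_defect_eq0 t : (p%:R : P) = 0 ->
  AAdd (apow (AAdd a b) p) (AAdd (aopp (apow a p)) (AAdd (aopp (apow b p)) (AScal p%:R t)))
  ≈ AZero k.
Proof.
move=> p0; apply: aadd_eq0.
  exact: ae_trans (apow_eqv _ (ae_sym (ae_rel _ _))) (apow_scaleX_eq0 _ _).
apply: aadd_eq0; first exact/ascal_eq0/apow_scaleX_eq0.
apply: aadd_eq0; first exact/ascal_eq0/apow_scaleX_eq0.
by rewrite p0; exact: ae_scal0.
Qed.

End Power.

Local Notation a := (lie_to_ass lie_a).
Local Notation b := (lie_to_ass lie_b).
Local Notation aopp t := (AScal (-1) t).

Lemma lambda2_ass_eqv0 : (2%:R : P) = 0 -> ass_eqv 2 (lie_to_ass lambda2) (AZero k).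
Proof.
move=> char2; apply: ae_trans _ (pow_defect_eq0 (aopp (AMul b a)) char2).
apply: (@ass_eqv_ncnorm _ _ _ _ [:: [:: 1; 1]; [:: 1; 0]; [:: 0; 1]; [:: 0; 0]]%N) => //=.
by do ! split; ring.
Qed.

Lemma lambda3_ass_eqv0 : (3%:R : P) = 0 -> ass_eqv 3 (lie_to_ass lambda3) (AZero k).
Proof.
move=> char3.
apply: ae_trans _ (pow_defect_eq0 (AAdd (aopp (AMul b (AMul a b))) (aopp (AMul a (AMul b a)))) char3).
apply: (@ass_eqv_ncnorm _ _ _ _ [:: [:: 1; 1; 1]; [:: 1; 1; 0]; [:: 1; 0; 1]; [:: 1; 0; 0];
    [:: 0; 1; 1]; [:: 0; 1; 0]; [:: 0; 0; 1]; [:: 0; 0; 0]]%N) => //=.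
by do ! split; ring.
Qed.


Definition m111 : 'X_{1..3} := (U_(i0) + U_(i1) + U_(i2))%MM.

Lemma m111E i : m111 i = 1%N.
Proof. by rewrite !mnmDE !mnm1E; case: i => [[|[|[|i]]] ?]. Qed.

Lemma mpolyX_m111 : 'X_[m111] = y1 * y2 * y3 :> P.
Proof. by rewrite !mpolyXD. Qed.

Lemma lambda2_lie_neqv0 : ~ lie_eqv 2 lambda2 (LZero k).
Proof.
move=> eq0.
pose Psi2 := Psi (y3 : P) y2 (- y1) 0 0 0 0 0 0 0 0 0.
have : inIp 2 (Psi2 (interp lambda2)) by move: eq0; apply: Psi_interp_inIp; ring.
have -> : Psi2 (interp lambda2) = - 'X_[m111].
  by rewrite mpolyX_m111 /Psi2 /Psi; cbn [interp lambda2 lie_a lie_b mgen]; munfold; ring.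
have m111_small i : (m111 i < 2)%N by rewrite m111E.
move/inIp_mcoeff/(_ m111_small)/eqP.
by rewrite mcoeffN mcoeffX eqxx oppr_eq0 oner_eq0.
Qed.

Lemma lambda3_lie_neqv0 : (2%:R : k) != 0 -> ~ lie_eqv 3 lambda3 (LZero k).
Proof.
move=> two_neq0 eq0.
pose Psi3 := Psi 0 0 0 (y2 * y3 ^+ 2 : P) (y2 ^+ 2 * y3) (- (y1 * y2 * y3))
  (- (y1 * y3 ^+ 2)) (- (y1 * y2 * y3)) (y1 ^+ 2 * y3) 0 0 0.
have : inIp 3 (Psi3 (interp lambda3)) by move: eq0; apply: Psi_interp_inIp; ring.
have -> : Psi3 (interp lambda3) = 'X_[m111 *+ 2] *+ 2.
  by rewrite -mpolyXn mpolyX_m111 /Psi3 /Psi; cbn [interp lambda3 lie_a lie_b mgen]; munfold; ring.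
have m222_small i : ((m111 *+ 2)%MM i < 3)%N by rewrite mulmnE m111E.
move/inIp_mcoeff/(_ m222_small)/eqP.
by rewrite mcoeffMn mcoeffX eqxx (negbTE two_neq0).
Qed.

End Witnesses.

Theorem mainTheorem12 (p : nat) (k : fieldType) :
  (p = 2 \/ p = 3)%N -> p \in [pchar k]%R ->
  ~ canonical_map_injective k p.
Proof.
move=> p23 pchar inj.
have p0 : (p%:R : {mpoly k[3]}) = 0 by rewrite -mpolyC_nat (pcharf0 pchar) mpolyC0.
case: p23 => p_eq; subst p.
- exact/lambda2_lie_neqv0/inj/(lambda2_ass_eqv0 p0).
- apply/lambda3_lie_neqv0/inj/(lambda3_ass_eqv0 p0).
  apply/eqP => two0; move: (pcharf0 pchar).
  by rewrite -[3%N]/(2 + 1)%N natrD two0 add0r => /eqP; rewrite oner_eq0.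
Qed.
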